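(* Let $n\ge 8$. The meromorphic $2$-jet differential $xyz\Phi$ on the affine part of the Fermat surface $S_n$ extends to a holomorphic $2$-jet differential on all of $S_n$. Moreover, if $n\ge 9$, then $xyz\Phi$ vanishes along the ample divisor $S_n\cap\{W=0\}$ of $S_n$.
   Context: $S_n\subset\mathbb{P}^3$ is the smooth Fermat surface $X^n+Y^n+Z^n=W^n$ in homogeneous coordinates $[X:Y:Z:W]$; on its affine part $W\neq0$ use $x=X/W$, $y=Y/W$, $z=Z/W$, so $x^n+y^n+z^n=1$. For $F\in\{x,y,z\}$ let $dF,d^2F$ be the jet coordinates and $D^2F:=d^2F+\frac{n-1}{F}(dF)^2$. $\Phi$ is the meromorphic $2$-jet differential on the affine part given by $\Phi=\frac{dy\,D^2z-dz\,D^2y}{x^{n-1}}=\frac{dz\,D^2x-dx\,D^2z}{y^{n-1}}=\frac{dx\,D^2y-dy\,D^2x}{z^{n-1}}$ (these three expressions coincide there). A holomorphic $k$-jet differential on a complex manifold is an object which in local coordinates $z_1,\dots,z_N$ is a polynomial in the jet variables $d^\ell z_j$ ($1\le\ell\le k$) with holomorphic coefficients. *)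

(* Algebraic model of the Fermat surface S_n in P^3 over an
   arbitrary numeric algebraically closed field C (C itself is the intended
   instance). *)
From HB Require Import structures.
From mathcomp Require Import all_boot all_order all_algebra.
Set Implicit Arguments. Unset Strict Implicit. Unset Printing Implicit Defensive.
Import Order.TTheory GRing.Theory Num.Theory.
Local Open Scope ring_scope.

(* A 2-jet of a scalar function: (value, first derivative, second derivative). *)
Record jet (C : Type) := Jet { j0 : C; j1 : C; j2 : C }.

Section Jets.
Variable C : fieldType.
Definition jconst (c : C) : jet C := Jet c 0 0.
Definition jadd (f g : jet C) : jet C := Jet (j0 f + j0 g) (j1 f + j1 g) (j2 f + j2 g).
Definition jsub (f g : jet C) : jet C := Jet (j0 f - j0 g) (j1 f - j1 g) (j2 f - j2 g).
(* Leibniz rule up to order 2 *)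
Definition jmul (f g : jet C) : jet C :=
  Jet (j0 f * j0 g) (j1 f * j0 g + j0 f * j1 g)
      (j2 f * j0 g + 2%:R * j1 f * j1 g + j0 f * j2 g).
Definition jpow (n : nat) (f : jet C) : jet C := iter n (jmul f) (jconst 1).
(* jet of 1/g (meaningful when j0 g != 0) *)
Definition jinv (g : jet C) : jet C :=
  Jet (j0 g)^-1 (- j1 g / j0 g ^+ 2)
      (- j2 g / j0 g ^+ 2 + 2%:R * j1 g ^+ 2 / j0 g ^+ 3).
Definition jdiv (f g : jet C) : jet C := jmul f (jinv g).
End Jets.

Definition cX : 'I_4 := @Ordinal 4 0 isT.
Definition cY : 'I_4 := @Ordinal 4 1 isT.
Definition cZ : 'I_4 := @Ordinal 4 2 isT.
Definition cW : 'I_4 := @Ordinal 4 3 isT.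

Definition fermat_jet (C : fieldType) (n : nat) (J : 'I_4 -> jet C) : jet C :=
  jadd (jadd (jpow n (J cX)) (jpow n (J cY))) (jsub (jpow n (J cZ)) (jpow n (J cW))).

(* J is a 2-jet of a holomorphic curve in S_n, written in the affine chart
   {coordinate k != 0} (coordinate k normalised to the constant 1).  For the
   smooth surface S_n these are exactly the 2-jets of germs of curves in S_n. *)
Definition on_chart (C : fieldType) (n : nat) (k : 'I_4) (J : 'I_4 -> jet C) : Prop :=
  J k = jconst 1 /\ fermat_jet n J = jconst 0.

Definition chart_change (C : fieldType) (J : 'I_4 -> jet C) (m : 'I_4) : 'I_4 -> jet C :=
  fun j => jdiv (J j) (J m).

Definition base (C : fieldType) (J : 'I_4 -> jet C) : 'I_4 -> C := fun j => j0 (J j).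

Inductive pexpr (C : Type) :=
| PVar of nat
| PConst of C
| PAdd of pexpr C & pexpr C
| PMul of pexpr C & pexpr C.

Fixpoint peval (C : fieldType) (e : nat -> C) (p : pexpr C) : C :=
  match p with
  | PVar i => e i
  | PConst c => c
  | PAdd p q => peval e p + peval e q
  | PMul p q => peval e p * peval e q
  end.

Definition env_pt (C : fieldType) (p : 'I_4 -> C) : nat -> C :=
  fun i => if (i < 4)%N then p (inord i) else 0.
(* environment of all jet coordinates: variable 3*j+l is d^l of coordinate j *)
Definition env_jet (C : fieldType) (J : 'I_4 -> jet C) : nat -> C :=
  fun i => if (i < 12)%N then
             let f := J (inord (i %/ 3)) in
             if (i %% 3 == 0)%N then j0 f else if (i %% 3 == 1)%N then j1 f else j2 f
           else 0.

(* In chart k, Psi is a 2-jet differential with regular (holomorphic)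
   coefficients near the point p: on a neighbourhood {D != 0} of p it is a
   polynomial in the jet variables with coefficients N/D, N, D polynomial. *)
Definition regular_at (C : fieldType) (n : nat) (k : 'I_4)
  (psi : ('I_4 -> jet C) -> C) (p : 'I_4 -> C) : Prop :=
  exists (N D : pexpr C),
    peval (env_pt p) D != 0 /\
    forall J, on_chart n k J -> peval (env_pt (base J)) D != 0 ->
      peval (env_pt (base J)) D * psi J = peval (env_jet J) N.

(* A global holomorphic 2-jet differential on S_n, given by its expressions
   Psi k in the four affine charts {coordinate k != 0}: each is holomorphic
   at every point of its chart, and they agree on overlaps. *)
Definition holo_jet_diff (C : fieldType) (n : nat)
  (Psi : 'I_4 -> ('I_4 -> jet C) -> C) : Prop :=
  (forall k J, on_chart n k J -> regular_at n k (Psi k) (base J)) /\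
  (forall k m J, on_chart n k J -> j0 (J m) != 0 ->
     Psi k J = Psi m (chart_change J m)).

(* The meromorphic jet differential x y z Phi on the affine part W != 0, with
   x = X/W, y = Y/W, z = Z/W, D^2 F = d^2F + (n-1)/F (dF)^2 and
   Phi = (dy D^2 z - dz D^2 y) / x^(n-1). *)
Definition D2 (C : fieldType) (n : nat) (F : jet C) : C :=
  j2 F + (n.-1)%:R / j0 F * j1 F ^+ 2.
Definition Phi (C : fieldType) (n : nat) (J : 'I_4 -> jet C) : C :=
  (j1 (J cY) * D2 n (J cZ) - j1 (J cZ) * D2 n (J cY)) / j0 (J cX) ^+ n.-1.
Definition xyzPhi (C : fieldType) (n : nat) (J : 'I_4 -> jet C) : C :=
  j0 (J cX) * j0 (J cY) * j0 (J cZ) * Phi n J.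

(* Write the 2-jet of a power as [P ^ n = P0 ^ (n - 2) * rho_n(P)] with [rho_n(P)]
   quadratic in [P].  Along a jet [J] of a curve in [S_n], the Fermat equation then
   becomes a linear relation [sum_k (+/-) x_k ^ (n - 2) rho_n(J_k) = 0] between four
   vectors of [C^3], so the signed 3x3 minors [m_k] of the matrix with rows
   [rho_n(J_k)] are proportional to the weights [x_k ^ (n - 2)].  Multiplying [J] by
   a jet [h] acts on every [rho_n(J_k)] by one lower triangular matrix with diagonal
   [h0 ^ 2], so each [m_k] picks up the factor [h0 ^ 6].  Hence
   [w ^ (n - 8) * m_k / (n ^ 2 * x_k ^ (n - 2))] is the same for every [k] with
   [x_k <> 0] and is invariant under rescaling: it defines a global 2-jet
   differential which, in the chart [x_k = 1], is a polynomial in the jet coordinates,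
   which vanishes on [w = 0] when [n >= 9], and which equals [x y z Phi] in the chart
   [w = 1]. *)

From mathcomp Require Import all_boot all_order all_algebra.
From mathcomp Require Import ring zify.
Set Implicit Arguments. Unset Strict Implicit. Unset Printing Implicit Defensive.
Import GRing.Theory Num.Theory.
Local Open Scope ring_scope.

Section JetAlgebra.
Variable C : fieldType.
Implicit Types (P Q R h : jet C) (n : nat).

Definition jscale (c : C) P : jet C := Jet (c * j0 P) (c * j1 P) (c * j2 P).

Definition jred n P : jet C :=
  Jet (j0 P ^+ 2) (n%:R * j0 P * j1 P)
      (n%:R * j0 P * j2 P + n%:R * (n.-1)%:R * j1 P ^+ 2).

Lemma jpow_jred n P : (2 <= n)%N -> jpow n P = jscale (j0 P ^+ (n - 2)) (jred n P).
Proof.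
case: n => [|[|m]] // _; rewrite !subSS subn0.
elim: m => [|m IH]; first by rewrite /jred /jscale /jpow /jmul /jconst /=; congr Jet; ring.
by rewrite [LHS]/jpow iterS -/(jpow _ _) IH /jmul /jscale /jred /= (exprS _ m); congr Jet; ring.
Qed.

Definition jdet P Q R : C :=
  j0 P * (j1 Q * j2 R - j2 Q * j1 R) - j0 Q * (j1 P * j2 R - j2 P * j1 R)
  + j0 R * (j1 P * j2 Q - j2 P * j1 Q).

Definition jtri (d a b c : C) P : jet C :=
  Jet (d * j0 P) (d * j1 P + a * j0 P) (d * j2 P + b * j1 P + c * j0 P).

Lemma jdet_jtri d a b c P Q R :
  jdet (jtri d a b c P) (jtri d a b c Q) (jtri d a b c R) = d ^+ 3 * jdet P Q R.
Proof. by rewrite /jdet /=; ring. Qed.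

Lemma jred_jmul n P h : (0 < n)%N ->
  jred n (jmul P h) = jtri (j0 h ^+ 2) (n%:R * j0 h * j1 h) (2%:R * n%:R * j0 h * j1 h)
    (n%:R * j0 h * j2 h + n%:R * (n.-1)%:R * j1 h ^+ 2) (jred n P).
Proof. by case: n => // n _; rewrite /jred /jtri /jmul /=; congr Jet; ring. Qed.

Lemma jdet_jred_jmul n P Q R h : (0 < n)%N ->
  jdet (jred n (jmul P h)) (jred n (jmul Q h)) (jred n (jmul R h))
  = j0 h ^+ 6 * jdet (jred n P) (jred n Q) (jred n R).
Proof. by move=> n0; rewrite !jred_jmul // jdet_jtri -exprM. Qed.

Definition fermat_comb (s : 'I_4 -> C) (r : 'I_4 -> jet C) : jet C :=
  jadd (jadd (jscale (s cX) (r cX)) (jscale (s cY) (r cY)))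
       (jsub (jscale (s cZ) (r cZ)) (jscale (s cW) (r cW))).

Lemma fermat_jet_jred n (J : 'I_4 -> jet C) : (2 <= n)%N ->
  fermat_jet n J = fermat_comb (fun k => j0 (J k) ^+ (n - 2)) (fun k => jred n (J k)).
Proof. by move=> n2; rewrite /fermat_jet !jpow_jred. Qed.

(* The rows other than [k], ordered so that the minors [jminor r k] carry the signs
   that make them proportional to the (unsigned) weights of [fermat_comb]. *)
Definition others (k : 'I_4) : 'I_4 * 'I_4 * 'I_4 :=
  match val k with
  | 0 => (cY, cZ, cW)
  | 1 => (cZ, cX, cW)
  | 2 => (cX, cY, cW)
  | _ => (cX, cY, cZ)
  end.

Definition jminor (r : 'I_4 -> jet C) (k : 'I_4) : C :=
  let: (a, b, c) := others k in jdet (r a) (r b) (r c).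

Lemma ord4_cases (k : 'I_4) : [\/ k = cX, k = cY, k = cZ | k = cW].
Proof.
by case: k => [[|[|[|[|m]]]] hk] //; [constructor 1|constructor 2|constructor 3|constructor 4];
  apply/val_inj.
Qed.

Lemma jminor_proportional s r : fermat_comb s r = jconst 0 ->
  forall i j, s i * jminor r j = s j * jminor r i.
Proof.
move=> hsr i j; apply/eqP; rewrite -subr_eq0; apply/eqP.
(* [s i * jminor r j - s j * jminor r i] is the determinant of the two remaining rows
   and the vanishing combination, in a suitable order. *)
have rel a b : jdet (r a) (r b) (fermat_comb s r) = 0 by rewrite hsr /jdet /=; ring.
case: (ord4_cases i) => ->; case: (ord4_cases j) => ->; rewrite ?subrr //;
  [ rewrite -(rel cW cZ) | rewrite -(rel cY cW) | rewrite -(rel cY cZ)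
  | rewrite -(rel cZ cW) | rewrite -(rel cW cX) | rewrite -(rel cZ cX)
  | rewrite -(rel cW cY) | rewrite -(rel cX cW) | rewrite -(rel cX cY)
  | rewrite -(rel cZ cY) | rewrite -(rel cX cZ) | rewrite -(rel cY cX) ];
  by rewrite /jminor /jdet /fermat_comb /=; ring.
Qed.

Lemma jminor_jred_jmul n (J : 'I_4 -> jet C) h k : (0 < n)%N ->
  jminor (fun i => jred n (jmul (J i) h)) k = j0 h ^+ 6 * jminor (fun i => jred n (J i)) k.
Proof. by move=> n0; rewrite /jminor; case: (others k) => [[a b] c]; apply: jdet_jred_jmul. Qed.

Lemma eq_jminor (r1 r2 : 'I_4 -> jet C) k : r1 =1 r2 -> jminor r1 k = jminor r2 k.
Proof. by move=> r12; rewrite /jminor; case: (others k) => [[a b] c]; rewrite !r12. Qed.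

End JetAlgebra.

Section PolynomialFunctions.
Variable C : fieldType.
Implicit Types (f g : (nat -> C) -> C).

Definition polynomial_fun f := exists p : pexpr C, forall e, peval e p = f e.

Lemma polynomial_var i : polynomial_fun (fun e => e i).
Proof. by exists (PVar C i). Qed.

Lemma polynomial_const c : polynomial_fun (fun=> c).
Proof. by exists (PConst c). Qed.

Lemma polynomialD f g : polynomial_fun f -> polynomial_fun g ->
  polynomial_fun (fun e => f e + g e).
Proof. by move=> [p pf] [q qg]; exists (PAdd p q) => e /=; rewrite pf qg. Qed.

Lemma polynomialM f g : polynomial_fun f -> polynomial_fun g ->
  polynomial_fun (fun e => f e * g e).
Proof. by move=> [p pf] [q qg]; exists (PMul p q) => e /=; rewrite pf qg. Qed.

Lemma polynomialN f : polynomial_fun f -> polynomial_fun (fun e => - f e).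
Proof. by move=> [p pf]; exists (PMul (PConst (-1)) p) => e /=; rewrite pf mulN1r. Qed.

Lemma polynomialX f m : polynomial_fun f -> polynomial_fun (fun e => f e ^+ m).
Proof.
move=> pf; elim: m => [|m IH]; first exact: polynomial_const.
by have [p pE] := polynomialM pf IH; exists p => e; rewrite pE exprS.
Qed.

Definition ejet (e : nat -> C) (i : 'I_4) : jet C :=
  Jet (e (3 * i)%N) (e (3 * i + 1)%N) (e (3 * i + 2)%N).

Lemma env_jet_block (J : 'I_4 -> jet C) (i : 'I_4) l : (l < 3)%N ->
  env_jet J (3 * i + l) =
  if l == 0%N then j0 (J i) else if l == 1%N then j1 (J i) else j2 (J i).
Proof.
move=> l3; rewrite /env_jet; have -> : (3 * i + l < 12)%N by case: i => i /=; lia.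
by rewrite mulnC divnMDl // divn_small // addn0 modnMDl modn_small // inord_val.
Qed.

Lemma ejet_env_jet (J : 'I_4 -> jet C) i : ejet (env_jet J) i = J i.
Proof. by rewrite /ejet -{1}[(3 * i)%N]addn0 !env_jet_block //; case: (J i). Qed.

Lemma polynomial_jminor n k :
  polynomial_fun (fun e => jminor (fun i => jred n (ejet e i)) k).
Proof.
rewrite /jminor; case: (others k) => [[a b] c]; rewrite /jdet /jred /=.
by repeat first [ apply: polynomial_var | apply: polynomial_const | apply: polynomialX
                | apply: polynomialN | apply: polynomialD | apply: polynomialM ].
Qed.

End PolynomialFunctions.

Section Extension.
Variable C : numFieldType.
Variable n : nat.
Hypothesis n_ge8 : (8 <= n)%N.
Implicit Types (J : 'I_4 -> jet C) (h : jet C).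

Let n_gt0 : (0 < n)%N. Proof. exact: leq_trans n_ge8. Qed.
Let n_ge2 : (2 <= n)%N. Proof. exact: leq_trans n_ge8. Qed.

Definition chart_expr J (k : 'I_4) : C :=
  j0 (J cW) ^+ (n - 8) * jminor (fun i => jred n (J i)) k
  / (n%:R ^+ 2 * j0 (J k) ^+ (n - 2)).

(* The [None] branch (all coordinates zero) never occurs on [S_n]. *)
Definition xyzPhi_ext J : C :=
  if [pick k | j0 (J k) != 0] is Some k then chart_expr J k else 0.

Lemma chart_expr_jmul J h k : j0 h != 0 ->
  chart_expr (fun j => jmul (J j) h) k = chart_expr J k.
Proof.
move=> h0; rewrite /chart_expr jminor_jred_jmul // /= !exprMn.
rewrite [_ * (_ * j0 h ^+ _)]mulrA invfM.
have -> : j0 h ^+ (n - 2) = j0 h ^+ (n - 8) * j0 h ^+ 6.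
  by rewrite -exprD; congr (_ ^+ _); lia.
(* [j0 (J k)] may vanish, so the inverse of that part of the denominator stays opaque. *)
move: (_ ^-1) => d; field.
by rewrite h0 expf_neq0.
Qed.

Lemma xyzPhi_ext_jmul J h : j0 h != 0 ->
  xyzPhi_ext (fun j => jmul (J j) h) = xyzPhi_ext J.
Proof.
move=> h0; rewrite /xyzPhi_ext (@eq_pick _ _ (fun k => j0 (J k) != 0)) => [|k].
  by case: pickP => // k _; apply: chart_expr_jmul.
by rewrite /= mulf_eq0 (negbTE h0) orbF.
Qed.

Lemma chart_expr_indep J i j : fermat_jet n J = jconst 0 ->
  j0 (J i) != 0 -> j0 (J j) != 0 -> chart_expr J i = chart_expr J j.
Proof.
rewrite fermat_jet_jred // => /jminor_proportional prop xi0 xj0.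
rewrite /chart_expr -mulrA -[RHS]mulrA; congr (_ * _); apply/eqP.
have n0 : (n%:R : C) != 0 by rewrite pnatr_eq0 -lt0n.
rewrite eqr_div ?mulf_neq0 ?expf_neq0 //.
apply/eqP; rewrite mulrCA [RHS]mulrCA; congr (_ * _).
by rewrite mulrC prop mulrC.
Qed.

Lemma xyzPhi_ext_surface J k : fermat_jet n J = jconst 0 -> j0 (J k) != 0 ->
  xyzPhi_ext J = chart_expr J k.
Proof.
move=> hJ xk0; rewrite /xyzPhi_ext; case: pickP => [i xi0|/(_ k)]; last by rewrite xk0.
exact: chart_expr_indep.
Qed.

Lemma xyzPhi_ext_chart k J : on_chart n k J ->
  xyzPhi_ext J = j0 (J cW) ^+ (n - 8) * jminor (fun i => jred n (J i)) k / n%:R ^+ 2.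
Proof.
case=> Jk hJ; rewrite (xyzPhi_ext_surface hJ (k := k)) /chart_expr Jk ?oner_neq0 //.
by rewrite expr1n mulr1.
Qed.

Lemma xyzPhi_ext_at_infinity k J : (9 <= n)%N -> on_chart n k J -> j0 (J cW) = 0 ->
  xyzPhi_ext J = 0.
Proof.
by move=> n9 hJ W0; rewrite (xyzPhi_ext_chart hJ) W0 expr0n subn_eq0 leqNgt n9 !mul0r.
Qed.

Lemma xyzPhi_ext_affine J : on_chart n cW J ->
  j0 (J cX) * j0 (J cY) * j0 (J cZ) != 0 -> xyzPhi_ext J = xyzPhi n J.
Proof.
move=> [JW hF]; rewrite !mulf_eq0 !negb_or => /andP[/andP[x0 y0] z0].
rewrite (xyzPhi_ext_surface hF x0) /chart_expr /jminor /= JW /=.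
rewrite /xyzPhi /Phi /D2 /jdet /jred /=.
have -> : n.-1 = (n - 2).+1 by lia.
rewrite !expr1n mul1r (exprS (j0 (J cX))); move: (n - 2)%N => m; field.
by rewrite x0 y0 z0 expf_neq0 // pnatr_eq0 -lt0n.
Qed.

Lemma xyzPhi_ext_regular k p : regular_at n k xyzPhi_ext p.
Proof.
pose f (e : nat -> C) :=
  j0 (ejet e cW) ^+ (n - 8) * jminor (fun i => jred n (ejet e i)) k / n%:R ^+ 2.
have [N NE] : polynomial_fun f.
  apply: polynomialM; last exact: polynomial_const.
  by apply: polynomialM; [apply/polynomialX/polynomial_var | apply: polynomial_jminor].
exists N, (PConst 1); split => [|J hJ _]; first exact: oner_neq0.
rewrite /= mul1r NE /f (xyzPhi_ext_chart hJ) ejet_env_jet.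
by congr (_ * _ * _); apply: eq_jminor => i; rewrite ejet_env_jet.
Qed.

End Extension.

Theorem lemma4p2 (C : numClosedFieldType) (n : nat) (hn : (8 <= n)%N) :
  exists Psi : 'I_4 -> ('I_4 -> jet C) -> C,
    holo_jet_diff n Psi /\
    (forall J, on_chart n cW J ->
       j0 (J cX) * j0 (J cY) * j0 (J cZ) != 0 -> Psi cW J = xyzPhi n J) /\
    ((9 <= n)%N -> forall k J, on_chart n k J -> j0 (J cW) = 0 -> Psi k J = 0).
Proof.
exists (fun=> xyzPhi_ext n); split; [split|split].
- by move=> k J _; apply: xyzPhi_ext_regular.
- move=> k m J _ Jm0; rewrite /chart_change /jdiv xyzPhi_ext_jmul //.
  by rewrite invr_eq0.
- exact: xyzPhi_ext_affine.
- by move=> n9 k J; apply: xyzPhi_ext_at_infinity.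
Qed.
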